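(* Let $G$ be a digraph with $n$ vertices. If $G$ has a primitive spanning strict subgraph, then $G$ admits a boolean nilpotent function of class at most $n^2-2n+3$.
   Context: Digraphs may have loops but no multiple arcs; cycles are directed, and a loop is a cycle of length $1$. A digraph is primitive if it is strongly connected and the greatest common divisor of the lengths of its cycles is $1$. A spanning strict subgraph of $G$ is a subgraph with the same vertex set and a proper subset of the arcs. A boolean function on $[n]$ is a map $f:\{0,1\}^n\to\{0,1\}^n$; its (unsigned) interaction graph has an arc $(j,i)$ iff $f_i$ depends essentially on $x_j$, i.e. $f_i(a)\neq f_i(b)$ for some $a,b$ differing only in coordinate $j$. An unsigned digraph $G$ on $[n]$ admits $f$ if the interaction graph of $f$ equals $G$. $f$ is nilpotent if $f^k$ is constant for some $k\geq 0$ ($f^0=\mathrm{id}$); the least such $k$ is its class. *)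

From mathcomp Require Import all_boot.
Set Implicit Arguments. Unset Strict Implicit. Unset Printing Implicit Defensive.

(* An (unsigned) digraph on [n] = 'I_n, loops allowed, no multiple arcs:
   G j i means there is an arc (j, i). *)
Definition digraph (n : nat) := rel 'I_n.

Definition has_cycle_of_length n (G : digraph n) (k : nat) : bool :=
  [exists t : k.-tuple 'I_n, [&& 0 < k, uniq t & cycle G t]].

Definition strongly_connected n (G : digraph n) : Prop :=
  forall x y : 'I_n, connect G x y.

(* gcd of the lengths of all cycles (every cycle has length <= n). *)
Definition cycle_gcd n (G : digraph n) : nat :=
  \big[gcdn/0]_(k < n.+1 | has_cycle_of_length G k) k.

Definition primitive n (G : digraph n) : Prop :=
  strongly_connected G /\ cycle_gcd G = 1.

Definition spanning_strict_subgraph n (H G : digraph n) : Prop :=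
  (forall j i, H j i -> G j i) /\ (exists j i, G j i /\ ~~ H j i).

Definition config (n : nat) := {ffun 'I_n -> bool}.
Definition boolfun (n : nat) := config n -> config n.

Definition depends n (f : boolfun n) (j i : 'I_n) : Prop :=
  exists a b : config n,
    [/\ forall k, k != j -> a k = b k, a j != b j & f a i != f b i].

Definition admits n (G : digraph n) (f : boolfun n) : Prop :=
  forall j i : 'I_n, G j i <-> depends f j i.

Definition iter_constant n (f : boolfun n) (k : nat) : Prop :=
  exists c : config n, forall x, iter k f x = c.

Definition nilpotent_class_le n (f : boolfun n) (N : nat) : Prop :=
  exists2 k, k <= N & iter_constant f k.

(* Pick an arc (j0, i0) of G outside the primitive subgraph H and let f_i be
   the conjunction of the x_j over the other arcs (j, i) of G, with f_i0 also
   requiring ~~ x_j0.  Then f^k(x)_i = 1 forces x_j = 1 whenever a walk of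
   length k avoiding (j0, i0), e.g. a walk of H, leads from j to i.  By
   Wielandt's bound such walks join all pairs for every k >= (n-1)^2 + 1:
   reach a shortest cycle (length s <= n-1) in at most n - s steps, wind
   around it, and leave it by a walk of length (n-1)s, which exists because
   closed-walk lengths at a vertex hit every residue mod s.  So f^k(x) = 0
   unless x = 1, and f(1) != 1. *)

From mathcomp Require Import all_boot zify.

Set Implicit Arguments. Unset Strict Implicit. Unset Printing Implicit Defensive.

Section Walks.
Variables (T : finType) (e : rel T).

Fixpoint walk (k : nat) (x y : T) : bool :=
  if k is k'.+1 then [exists z, walk k' x z && e z y] else x == y.

Lemma walk1 x y : walk 1 x y = e x y.
Proof.
apply/existsP/idP => [[z /andP[/eqP -> //]]|exy].
by exists x; rewrite eqxx.
Qed.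

Lemma walkD a b x y z : walk a x y -> walk b y z -> walk (a + b) x z.
Proof.
elim: b z => [|b IHb] z wxy /=; first by move/eqP <-; rewrite addn0.
case/existsP=> u /andP[wyu euz]; rewrite addnS /=.
by apply/existsP; exists u; rewrite (IHb _ wxy wyu).
Qed.

Lemma walkDP a b x z : walk (a + b) x z -> exists2 y, walk a x y & walk b y z.
Proof.
elim: b z => [|b IHb] z /=; first by rewrite addn0; exists z.
rewrite addnS /= => /existsP[u /andP[wxu euz]].
have [y wxy wyu] := IHb _ wxu.
by exists y => //; apply/existsP; exists u; rewrite wyu.
Qed.

Lemma path_walk x p : path e x p -> walk (size p) x (last x p).
Proof.
elim: p x => [|y p IHp] x /=; first by rewrite eqxx.
case/andP=> exy pp; change (walk (1 + size p) x (last y p)).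
by apply: (walkD (y := y)); [rewrite walk1 | exact: IHp].
Qed.

Lemma connect_walk x y : connect e x y -> exists k, walk k x y.
Proof. by case/connectP=> p pp ->; exists (size p); apply: path_walk. Qed.

Lemma cycle_walk p x : cycle e p -> x \in p -> walk (size p) x x.
Proof.
move=> cp /rot_to[i q rot_p].
move: cp; rewrite -(rot_cycle i) -(size_rot i) rot_p.
by move/path_walk; rewrite size_rcons last_rcons.
Qed.

Lemma cycle_walk_stays p x : cycle e p -> x \in p ->
  forall r, exists2 y, y \in p & walk r x y.
Proof.
move=> cp px; elim=> [|r [y py wxy]]; first by exists x; rewrite /= ?eqxx.
exists (next p y); first by rewrite mem_next.
by apply/existsP; exists y; apply/andP; split; last exact: next_cycle cp py.
Qed.

End Walks.

Lemma sub_walk (T : finType) (e e' : rel T) :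
  subrel e e' -> forall k x y, walk e k x y -> walk e' k x y.
Proof.
move=> ee'; elim=> [|k IHk] x y //= /existsP[z /andP[wxz ezy]].
by apply/existsP; exists z; rewrite (IHk _ _ wxz) (ee' _ _ ezy).
Qed.

Lemma increasing_chain_setT (T : finType) (F : nat -> {set T}) :
  (forall t, F t \subset F t.+1) ->
  (forall t, F t.+1 \subset F t -> F t = setT) ->
  forall t, #|T| <= #|F 0| + t -> F t = setT.
Proof.
move=> sub_next stable t; rewrite -cardsT.
suff [-> // | grows] : F t = setT \/ #|F 0| + t <= #|F t|.
  by move/leq_trans/(_ grows) => le_T; apply/eqP; rewrite eqEcard subsetT.
elim: t => [|t [full | IHt]]; first by right; rewrite addn0.
- by left; apply/eqP; rewrite eqEsubset subsetT -full sub_next.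
- have [F_stable | F_grows] := boolP (F t.+1 \subset F t).
    by left; apply/eqP; rewrite eqEsubset subsetT -(stable t F_stable) sub_next.
  right; rewrite addnS; apply: leq_ltn_trans IHt (proper_card _).
  by rewrite properE sub_next.
Qed.

Section ResidueClosure.
Variables (S : nat -> Prop) (s : nat).
Hypotheses (S0 : S 0) (SD : forall a b, S a -> S b -> S (a + b)) (s_gt0 : 0 < s).

Definition residue_hit r := exists2 k, S k & k = r %[mod s].

Lemma residue_hit0 : residue_hit 0. Proof. by exists 0. Qed.

Lemma residue_hit_eqmod a b : residue_hit a -> a = b %[mod s] -> residue_hit b.
Proof. by case=> k Sk ka ab; exists k; rewrite // ka. Qed.

Lemma residue_hitD a b : residue_hit a -> residue_hit b -> residue_hit (a + b).
Proof.
case=> k Sk ka [l Sl lb]; exists (k + l); first exact: SD.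
by rewrite -modnDm ka lb modnDm.
Qed.

Lemma residue_hitM q a : residue_hit a -> residue_hit (q * a).
Proof.
move=> ha; elim: q => [|q IHq]; first exact: residue_hit0.
by rewrite mulSn; apply: residue_hitD.
Qed.

Lemma residue_hitB a b : a <= b -> residue_hit a -> residue_hit b ->
  residue_hit (b - a).
Proof.
move=> ab ha hb.
apply: (residue_hit_eqmod (residue_hitD hb (residue_hitM s.-1 ha))).
by rewrite -[b in LHS](subnK ab) -addnA -mulSn prednK // addnC (mulnC s) modnMDl.
Qed.

Lemma residue_hit_gcdn a b : residue_hit a -> residue_hit b ->
  residue_hit (gcdn a b).
Proof.
have [-> _ //|a_gt0 ha hb] := posnP a; first by rewrite gcd0n.
case: (egcdnP b a_gt0) => km kn def_g _.
rewrite (_ : gcdn a b = km * a - kn * b); last by rewrite def_g addKn.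
by apply: residue_hitB; [rewrite def_g leq_addr | exact: residue_hitM..].
Qed.

End ResidueClosure.

Section ReachInBoundedTime.
Variables (T : finType) (e : rel T).

Lemma walk_to_set_within (A : {set T}) x :
  (forall z, exists2 c, c \in A & connect e z c) ->
  exists2 m, m <= #|T| - #|A| & exists2 c, c \in A & walk e m x c.
Proof.
move=> reachA.
pose F u := [set z | [exists m : 'I_u.+1, [exists c in A, walk e m z c]]].
have AF u : A \subset F u.
  apply/subsetP=> c cA; rewrite inE; apply/existsP; exists ord0.
  by apply/existsP; exists c; rewrite cA /=.
have sub_next u : F u \subset F u.+1.
  apply/subsetP=> z; rewrite !inE => /existsP[m wm].
  by apply/existsP; exists (widen_ord (leqnSn _) m).
have stable u : F u.+1 \subset F u -> F u = setT.
  move=> Fstable; apply/eqP; rewrite eqEsubset subsetT; apply/subsetP=> z _.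
  have [c cA /connect_walk[k wzc]] := reachA z.
  elim: k z wzc => [|k IHk] z wzc.
    by rewrite (eqP wzc); apply: (subsetP (AF u)).
  move: wzc; change (walk e (1 + k) z c -> z \in F u).
  case/walkDP=> z' ezz' wz'c.
  have := IHk z' wz'c; rewrite inE => /existsP[m /existsP[c' /andP[c'A wm]]].
  have m_lt : 1 + m < u.+2 by rewrite add1n ltnS ltn_ord.
  apply: (subsetP Fstable); rewrite inE; apply/existsP; exists (Ordinal m_lt).
  by apply/existsP; exists c'; rewrite c'A (walkD ezz' wm).
have /setP/(_ x) : F (#|T| - #|A|) = setT.
  by apply: increasing_chain_setT => //; move: (subset_leq_card (AF 0)); lia.
rewrite !inE => /existsP[m /existsP[c /andP[cA wm]]].
by exists m; [rewrite -ltnS | exists c].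
Qed.

Lemma walk_multiples_setT c s :
  walk e s c c -> (forall y, exists k, walk e (k * s) c y) ->
  forall y, walk e (#|T|.-1 * s) c y.
Proof.
move=> wcc reach y.
pose F u := [set z | walk e (u * s) c z].
have cF u : c \in F u.
  rewrite inE; elim: u => [|u IHu] /=; first by rewrite eqxx.
  by rewrite mulSn (walkD wcc).
have sub_next u : F u \subset F u.+1.
  by apply/subsetP=> z; rewrite !inE mulSn; apply: walkD.
have stable u : F u.+1 \subset F u -> F u = setT.
  move=> Fstable; apply/eqP; rewrite eqEsubset subsetT; apply/subsetP=> z _.
  have [k] := reach z; elim: k z => [|k IHk] z; first by move/eqP <-.
  rewrite mulSn addnC => /walkDP[z' /IHk z'F wz'z].
  apply: (subsetP Fstable); rewrite inE mulSn addnC.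
  by rewrite inE in z'F; apply: walkD z'F wz'z.
have /setP/(_ y) : F #|T|.-1 = setT.
  apply: increasing_chain_setT => //.
  have : 0 < #|F 0| by apply/card_gt0P; exists c.
  lia.
by rewrite !inE.
Qed.

End ReachInBoundedTime.

Section Primitive.
Variables (n : nat) (H : digraph n).
Hypotheses (H_sc : strongly_connected H) (gcd1 : cycle_gcd H = 1).

Lemma cycle_of_length_walk k : has_cycle_of_length H k -> exists v, walk H k v v.
Proof.
case/existsP=> t /and3P[k_gt0 _ ct]; rewrite -(size_tuple t) in k_gt0 *.
case: (tval t) k_gt0 ct => // v p _ ct.
by exists v; apply: cycle_walk ct (mem_head v p).
Qed.

Lemma closed_walk_residues s w r :
  0 < s -> residue_hit (fun k => walk H k w w) s r.
Proof.
move=> s_gt0; set S := fun k => walk H k w w.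
have S0 : S 0 by rewrite /S /= eqxx.
have SD a b : S a -> S b -> S (a + b) by apply: walkD.
suff : residue_hit S s 1 by rewrite -[r]muln1; apply: residue_hitM.
rewrite -gcd1; apply: (big_ind (residue_hit S s)); first exact: residue_hit0.
  by move=> a b; apply: residue_hit_gcdn.
move=> k /cycle_of_length_walk[v wvv].
have [[l wwv] [p wvw]] := (connect_walk (H_sc w v), connect_walk (H_sc v w)).
have Slp : S (l + p) := walkD wwv wvw.
have Slkp : S (l + k + p) := walkD (walkD wwv wvv) wvw.
have -> : nat_of_ord k = l + k + p - (l + p) by lia.
by apply: residue_hitB => //; [lia | exists (l + p) | exists (l + k + p)].
Qed.

Lemma walk_multiple_length s w y : 0 < s -> exists q, walk H (q * s) w y.
Proof.
move=> s_gt0.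
have [l wwy] := connect_walk (H_sc w y).
(* pad with a closed walk of length -l mod s *)
have [k wkw k_eq] := closed_walk_residues w (l * s.-1) s_gt0.
exists ((k + l) %/ s); rewrite divnK; first exact: walkD wkw wwy.
rewrite /dvdn -modnDml k_eq modnDml -{2}[l]muln1 -mulnDr addn1 prednK //.
by rewrite modnMl.
Qed.

Lemma short_cycle :
  exists cyc : seq 'I_n, [/\ uniq cyc, cycle H cyc & 0 < size cyc <= maxn 1 n.-1].
Proof.
have /existsP[k0 cycle_k0] : [exists k : 'I_n.+1, has_cycle_of_length H k].
  apply: contraT => /existsPn no_cycle.
  by move: gcd1; rewrite /cycle_gcd big_pred0 // => k; apply/negbTE/no_cycle.
have [s] := ex_minnP (ex_intro (has_cycle_of_length H) _ cycle_k0).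
case/existsP=> t /and3P[s_gt0 ut ct] s_min.
exists t; split; rewrite // size_tuple s_gt0 /=.
have s_le_n : s <= n.
  rewrite -(size_tuple t) -(card_uniqP ut).
  by apply: leq_trans (max_card _) _; rewrite card_ord.
have [s_lt_n | s_ge_n] := ltnP s n; first by lia.
have : n %| 1.
  rewrite -gcd1; apply/dvdn_biggcdP => i /s_min.
  have := ltn_ord i; rewrite ltnS => i_le_n s_le_i.
  by rewrite (_ : nat_of_ord i = n) //; lia.
by rewrite dvdn1 => /eqP n1; lia.
Qed.

Lemma wielandt_bound k : n ^ 2 + 2 - 2 * n <= k -> forall x y, walk H k x y.
Proof.
move=> k_ge x y; have [cyc [u_cyc c_cyc /andP[s_gt0 s_le]]] := short_cycle.
have [c0 c0_cyc] : exists c0, c0 \in cyc.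
  by case E: cyc s_gt0 => [//|c0 q] _; exists c0; rewrite mem_head.
set s := size cyc in s_gt0 s_le.
have [|m m_le [c]] := walk_to_set_within (e := H) (A := [set z in cyc]) x.
  by move=> z; exists c0; rewrite ?inE.
rewrite inE cardsE (card_uniqP u_cyc) card_ord -/s in m_le * => c_cyc' wxc.
set N := n.-1 * s.
have [c' c'_cyc wcc'] := cycle_walk_stays c_cyc c_cyc' (k - m - N).
have wc'y : walk H N c' y.
  have reach z : exists q, walk H (q * s) c' z by apply: walk_multiple_length.
  have := walk_multiples_setT (cycle_walk c_cyc c'_cyc) reach y.
  by rewrite card_ord.
have -> : k = m + (k - m - N) + N.
  suff : m + N <= k by lia.
  by rewrite /N; nia.
exact: walkD (walkD wxc wcc') wc'y.
Qed.

End Primitive.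

Section ConjunctiveNetwork.
Variables (n : nat) (G : digraph n) (j0 i0 : 'I_n).

Definition del_arc : digraph n := fun j i => G j i && ((j, i) != (j0, i0)).

(* The arc (j0, i0) survives only as the negative literal ~~ x j0 in f i0: the
   interaction graph is still G, but the all-ones point is no longer fixed. *)
Definition conj_net : boolfun n := fun x =>
  [ffun i => [forall j, del_arc j i ==> x j] && ((i == i0) ==> ~~ x j0)].

Lemma conj_net_iter_walk k x i j :
  iter k conj_net x i -> walk del_arc k j i -> x j.
Proof.
elim: k i => [|k IHk] i /=; first by move=> xi /eqP ->.
rewrite ffunE => /andP[/forallP fi _] /existsP[z /andP[wjz ezi]].
exact: IHk (implyP (fi z) ezi) wjz.
Qed.

Lemma depends_conj_net j i : G j i -> depends conj_net j i.
Proof.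
move=> Gji; pose base : config n := [ffun k => (i == i0) ==> (k != j0)].
exists [ffun k => (k == j) || base k], [ffun k => (k != j) && base k].
split; first by move=> k /negbTE; rewrite !ffunE => ->.
  by rewrite !ffunE eqxx.
rewrite /conj_net !ffunE.
have [/eqP[-> ->] | arc_ne] := boolP ((j, i) == (j0, i0)).
  rewrite ?ffunE !eqxx /= andbT andbF eq_sym eqbF_neg negbK; apply/forallP => k.
  apply/implyP=> /andP[_]; rewrite xpair_eqE eqxx andbT => k_ne.
  by rewrite !ffunE k_ne implybT.
have del_ji : del_arc j i by rewrite /del_arc Gji arc_ne.
have -> : [forall k, del_arc k i ==> [ffun k => (k != j) && base k] k] = false.
  by apply/negbTE/forallP => /(_ j); rewrite del_ji ffunE eqxx.
rewrite andFb eqbF_neg negbK; apply/andP; split.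
  apply/forallP=> k; apply/implyP=> /andP[_ ki_ne]; rewrite !ffunE.
  apply/orP; right; apply/implyP=> /eqP i_eq.
  by move: ki_ne; rewrite i_eq xpair_eqE eqxx andbT.
apply/implyP=> /eqP i_eq; move: arc_ne; rewrite i_eq xpair_eqE eqxx andbT => j_ne.
by rewrite eqxx eq_sym (negbTE j_ne).
Qed.

Lemma conj_net_depends_arc j i : G j0 i0 -> depends conj_net j i -> G j i.
Proof.
move=> G0 [a [b [ab_eq _ ab_ne]]]; apply: contraTT ab_ne => nGji.
rewrite negbK /conj_net !ffunE; apply/eqP; congr (_ && _).
  apply: eq_forallb => k; case del_ki: (del_arc k i) => //=.
  by apply: ab_eq; apply: contraNneq nGji => <-; case/andP: del_ki.
case: eqP => //= i_eq; rewrite ab_eq //.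
by apply: contraNneq nGji => <-; rewrite i_eq.
Qed.

Lemma admits_conj_net : G j0 i0 -> admits G conj_net.
Proof.
move=> G0 j i; split; first exact: depends_conj_net.
exact: conj_net_depends_arc.
Qed.

Lemma conj_net_iter_constant L :
  (forall k, L <= k -> forall j i, walk del_arc k j i) ->
  iter_constant conj_net L.+1.
Proof.
move=> walks; exists [ffun => false].
have vanish (x : config n) k :
    L <= k -> [exists j, ~~ x j] -> iter k conj_net x = [ffun => false].
  move=> L_le /existsP[j xj]; apply/ffunP=> i; rewrite ffunE.
  by apply: contraNF xj => /conj_net_iter_walk; apply; apply: walks.
move=> x; have [x_false | /existsPn x_true] := boolP [exists j, ~~ x j].
  exact: vanish.
rewrite iterSr; apply: vanish => //; apply/existsP; exists i0.
by rewrite ffunE eqxx /= (negPn (x_true j0)) andbF.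
Qed.

End ConjunctiveNetwork.

Theorem proposition7 (n : nat) (G : digraph n) :
  (exists H : digraph n, spanning_strict_subgraph H G /\ primitive H) ->
  exists f : boolfun n, admits G f /\ nilpotent_class_le f (n ^ 2 + 3 - 2 * n).
Proof.
case=> H [[H_sub [j0 [i0 [G0 notH0]]]] H_prim].
have H_del : subrel H (del_arc G j0 i0).
  move=> j i Hji; rewrite /del_arc H_sub //=.
  by apply: contraNneq notH0 => -[<- <-].
exists (conj_net G j0 i0); split; first exact: admits_conj_net.
exists (n ^ 2 + 2 - 2 * n).+1; first by nia.
apply: conj_net_iter_constant => k k_ge j i.
case: H_prim => H_sc gcd1.
exact: sub_walk H_del _ _ _ (wielandt_bound H_sc gcd1 k_ge j i).
Qed.
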